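(* Let $\hat q$ be an $n\times n$ and $\hat p$ an $m\times m$ parametric matrix, let $M$ be an $n\times m$ $(\hat q,\hat p)$-Manin matrix over $\mathfrak R$ and $N$ an $m\times n$ $(\hat p,\hat q)$-Manin matrix over $\mathfrak R$ such that every $N_{ij}$ commutes with every $M_{kl}$. Then $$\mathrm{char}_{\hat q}(MN,t)=t^{n-m}\,\mathrm{char}_{\hat p}(NM,t).$$
   Context: $\mathfrak R$ is an associative unital algebra over $\mathbb C$; $t$ is a central indeterminate. A parametric $n\times n$ matrix is $\hat q=(q_{ij})$ with nonzero complex entries, $q_{ij}q_{ji}=1$, $q_{ii}=1$. For parametric $\hat q$ ($n\times n$) and $\hat p$ ($m\times m$), an $n\times m$ matrix $M$ over $\mathfrak R$ is a $(\hat q,\hat p)$-Manin matrix if $M_{ik}M_{jk}=q_{ji}M_{jk}M_{ik}$ for $i<j$ and all $k$, and $M_{ik}M_{jl}-q_{ji}p_{kl}M_{jl}M_{ik}+p_{kl}M_{il}M_{jk}-q_{ji}M_{jk}M_{il}=0$ for $i<j$, $k<l$. Let $P_{\hat q}=\sum_{i,j}q_{ji}E_{ij}\otimes E_{ji}$; $s_i\mapsto P_{\hat q}^{(i,i+1)}$ defines an action $\sigma\mapsto P_{\hat q}^{\sigma}$ of $S_k$ on $(\mathbb C^n)^{\otimes k}$, and $A_{\hat q}^{(k)}=\frac1{k!}\sum_{\sigma\in S_k}\mathrm{sgn}(\sigma)P_{\hat q}^{\sigma}$. For an $n\times n$ matrix $X$ over $\mathfrak R$, $e_0(X)=1$, $e_k(X)=\mathrm{tr}_{1,\dots,k}A_{\hat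 q}^{(k)}X_1\cdots X_k$ ($X_a$ = $X$ acting on the $a$-th tensor factor, full trace), and $\mathrm{char}_{\hat q}(X,t)=\sum_{k=0}^n(-1)^ke_k(X)t^{n-k}$; $\mathrm{char}_{\hat p}$ of an $m\times m$ matrix is defined likewise with $\hat p$ and $m$. *)

From HB Require Import structures.
From mathcomp Require Import all_boot all_order all_algebra all_fingroup.
From mathcomp Require Import complex.
From mathcomp Require Import Rstruct.
Set Implicit Arguments. Unset Strict Implicit. Unset Printing Implicit Defensive.
Import Order.TTheory GRing.Theory Num.Theory.
Local Open Scope ring_scope.

Definition CC : fieldType := (Rdefinitions.R)[i].

Definition parametric (n : nat) (q : 'M[CC]_n) : Prop :=
  (forall i j, q i j != 0) /\ (forall i j, q i j * q j i = 1) /\ (forall i, q i i = 1).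

Section ManinDefs.
Variable A : algType CC.

Definition manin (n m : nat) (q : 'M[CC]_n) (p : 'M[CC]_m) (M : 'M[A]_(n, m)) : Prop :=
  (forall (i j : 'I_n) (k : 'I_m), (i < j)%N ->
     M i k * M j k = q j i *: (M j k * M i k)) /\
  (forall (i j : 'I_n) (k l : 'I_m), (i < j)%N -> (k < l)%N ->
     M i k * M j l - (q j i * p k l) *: (M j l * M i k)
     + p k l *: (M i l * M j k) - q j i *: (M j k * M i l) = 0).

(* Operators on (C^n)^{(x) k}, with entries in a ring S, written as
   matrices indexed by the standard basis e_{I_1} (x) ... (x) e_{I_k}. *)
Section Ops.
Variables (n k : nat).
Definition tidx := {ffun 'I_k -> 'I_n}.
Definition op (S : Type) := tidx -> tidx -> S.
Definition op_mul (S : pzRingType) (X Y : op S) : op S :=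
  fun I J => \sum_(K : tidx) X I K * Y K J.
Definition op_id (S : pzRingType) : op S := fun I J => (I == J)%:R.
Definition op_prod (S : pzRingType) (s : seq (op S)) : op S :=
  foldr (@op_mul S) (@op_id S) s.

(* X_a : the n x n matrix X acting on the a-th tensor factor. *)
Definition op_at (X : 'M[A]_n) (a : 'I_k) : op A :=
  fun I J => X (I a) (J a) * \prod_(b : 'I_k | b != a) ((I b == J b)%:R : A).

(* P_q^{(u,v)} = sum_{i,j} q_{ji} (E_{ij})_u (E_{ji})_v  for u <> v. *)
Definition Pq_at (q : 'M[CC]_n) (u v : 'I_k) : op CC :=
  fun I J => \sum_(i : 'I_n) \sum_(j : 'I_n)
    q j i * ((I u == i) && (J u == j) && (I v == j) && (J v == i))%:R
          * \prod_(b : 'I_k | (b != u) && (b != v)) ((I b == J b)%:R : CC).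

(* Letters of words in the generators s_1, ..., s_{k-1}:  the letter
   a : 'I_k with 1 <= a stands for s_a (swapping the 0-indexed positions
   a-1 and a); the letter 0 stands for the identity (padding). *)
Definition letter_perm (a : 'I_k) : 'S_k :=
  if a == 0 :> nat then 1%g else tperm (insubd a a.-1) a.
Definition letter_P (q : 'M[CC]_n) (a : 'I_k) : op CC :=
  if a == 0 :> nat then @op_id CC else Pq_at q (insubd a a.-1) a.

(* The permutation s_{a_1} s_{a_2} ... s_{a_L} (composition of maps,
   s_{a_L} applied first; mathcomp's product is in diagrammatic order). *)
Definition word_perm (w : seq 'I_k) : 'S_k := (\prod_(a <- rev w) letter_perm a)%g.
Definition word_P (q : 'M[CC]_n) (w : seq 'I_k) : op CC :=
  op_prod [seq letter_P q a | a <- w].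

(* P_q^sigma : the image of sigma under the action s_i |-> P_q^{(i,i+1)},
   computed along a word (of length <= k*k, padded with identity letters)
   representing sigma.  Every sigma has such a word. *)
Definition Pq_perm (q : 'M[CC]_n) (s : 'S_k) : op CC :=
  match [pick w : (k * k).-tuple 'I_k | word_perm w == s] with
  | Some w => word_P q w
  | None => fun _ _ => 0
  end.

Definition antisym (q : 'M[CC]_n) : op CC :=
  fun I J => (k`!%:R)^-1 * \sum_(s : 'S_k) (-1) ^+ s * Pq_perm q s I J.

(* e_k(X) = tr_{1..k} A_q^{(k)} X_1 ... X_k  (k >= 1). *)
Definition ek (q : 'M[CC]_n) (X : 'M[A]_n) : A :=
  \sum_(I : tidx) \sum_(J : tidx)
     (antisym q I J)%:A * op_prod [seq op_at X a | a <- enum 'I_k] J I.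
End Ops.

Definition e_q (n : nat) (q : 'M[CC]_n) (k : nat) (X : 'M[A]_n) : A :=
  if k == 0%N then 1 else @ek n k q X.

Definition char_q (n : nat) (q : 'M[CC]_n) (X : 'M[A]_n) : {poly A} :=
  \sum_(k < n.+1) ((-1) ^+ k * e_q q k X)%:P * 'X^(n - k).
End ManinDefs.

From HB Require Import structures.
From mathcomp Require Import all_boot all_order all_algebra all_fingroup.
From mathcomp Require Import complex.
From mathcomp Require Import Rstruct.
From mathcomp Require Import zify ring.
Set Implicit Arguments. Unset Strict Implicit. Unset Printing Implicit Defensive.
Import GRing.Theory.
Local Open Scope ring_scope.

(* Conjugating by the diagonal weight psi_q(J) = prod_{x<y, J_x<J_y} q_{J_x J_y} turns
   P_q^sigma into the plain permutation operator, so A_q^(k) = psi_q^-1 A^(k) psi_q with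
   A^(k) the ordinary antisymmetrizer.  In this gauge the Manin relations say that
   (A_q M_1...M_k)_{I,L} / psi_p(L) is alternating in the column multi-index L, i.e.
   A_q M_1...M_k A_p = A_q M_1...M_k.  As the entries of M and N commute,
   (MN)_1...(MN)_k = M_1...M_k N_1...N_k, hence
     e_k(MN) = tr A_q M_1...M_k A_p N_1...N_k = sum_{I,R} (A_q M_1..M_k)_{IR} (A_p N_1..N_k)_{RI},
   which is symmetric under (M,q) <-> (N,p), so e_k(MN) = e_k(NM); and it vanishes for
   k > m since then A_p^(k) = 0.  Comparing coefficients gives the identity. *)

Section AdjacentTranspositions.
Variable k : nat.
Implicit Types (s : 'S_k) (u v x y : 'I_k).

Lemma val_tperm u v x : val (tperm u v x) =
  if val x == val u then val v else if val x == val v then val u else val x.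
Proof.
case: tpermP => [->|->|/eqP xu /eqP xv]; rewrite ?eqxx //.
  by case: eqP => // /val_inj ->.
by rewrite !val_eqE (negbTE xu) (negbTE xv).
Qed.

Lemma adj_neq u v : v = u.+1 :> nat -> u != v.
Proof. by move=> Huv; rewrite -val_eqE /= Huv ltn_eqF. Qed.

Lemma ltn_tperm_adj u v x y : v = u.+1 :> nat ->
  (tperm u v x < tperm u v y)%N && ((x, y) != (v, u)) =
  (x < y)%N && ((x, y) != (u, v)).
Proof.
move=> Huv; rewrite !xpair_eqE -!val_eqE /= !val_tperm /=.
by repeat case: eqP => ?; apply/idP/idP; lia.
Qed.

(* An adjacent transposition permutes the pairs x < y, except that (u, v) becomes (v, u). *)
Lemma big_pairs_tperm_adj (R : Type) (idx : R) (op : Monoid.com_law idx)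
    (F : 'I_k -> 'I_k -> R) u v : v = u.+1 :> nat ->
  op (\big[op/idx]_(x : 'I_k) \big[op/idx]_(y : 'I_k | (x < y)%N)
        F (tperm u v x) (tperm u v y)) (F u v) =
  op (\big[op/idx]_(x : 'I_k) \big[op/idx]_(y : 'I_k | (x < y)%N) F x y) (F v u).
Proof.
move=> Huv; rewrite !pair_big_dep /=.
pose tt (p : 'I_k * 'I_k) := (tperm u v p.1, tperm u v p.2).
have tt_inj : injective tt by move=> [a b] [c d] [/perm_inj -> /perm_inj ->].
rewrite [in LHS](reindex_inj tt_inj) /= (bigD1 (v, u)) /=; last by rewrite tpermR tpermL Huv.
rewrite [in RHS](bigD1 (u, v)) /=; last by rewrite Huv.
rewrite (eq_bigl (fun p : 'I_k * 'I_k => (p.1 < p.2)%N && (p != (u, v)))) => [|[x y]]; last first.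
  by rewrite /= ltn_tperm_adj.
under eq_bigr do rewrite !tpermK.
rewrite !tpermK Monoid.mulmAC [RHS]Monoid.mulmAC.
by congr (op _ _); apply: Monoid.mulmC.
Qed.

Definition inversions s : nat := \sum_(x : 'I_k) \sum_(y : 'I_k | (x < y)%N) (s y < s x)%N.

Lemma inversions_tperm_adj s u v : v = u.+1 :> nat ->
  (inversions (tperm u v * s) + (s v < s u) = inversions s + (s u < s v))%N.
Proof.
move=> Huv; have := big_pairs_tperm_adj addn (fun x y => (s y < s x)%N) Huv.
by rewrite /inversions; under eq_bigr do under eq_bigr do rewrite -!permM.
Qed.

Lemma inversions_leq s : (inversions s <= k * k)%N.
Proof.
apply: (@leq_trans (\sum_(x : 'I_k) k)); last by rewrite sum_nat_const card_ord.
apply: leq_sum => x _; rewrite -[X in (_ <= X)%N]card_ord -sum1_card big_mkcond.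
by apply: leq_sum => y _; case: ifP => // _; apply: leq_b1.
Qed.

Lemma perm_ascending_id s : (forall u v, v = u.+1 :> nat -> (s u < s v)%N) -> s = 1%g.
Proof.
move=> asc; have le_s x : (x <= s x)%N.
  suff le_s i (lt_ik : (i < k)%N) : (i <= s (Ordinal lt_ik))%N by case: x.
  elim: i lt_ik => [//|i IH] lt_ik.
  exact: leq_ltn_trans (IH (ltnW lt_ik)) (asc (Ordinal _) (Ordinal lt_ik) erefl).
have sum_eq : \sum_(x : 'I_k) (x : nat) = \sum_(x : 'I_k) (s x : nat).
  exact: (reindex_inj (@perm_inj _ s)).
have [_] := leqif_sum (fun x (_ : true) => leqif_eq (le_s x)).
rewrite sum_eq eqxx => /esym/forall_inP s_id.
by apply/permP => x; apply/val_inj/esym/eqP; rewrite perm1 s_id.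
Qed.

Lemma perm_descent_or_id s : s = 1%g \/ exists u v, v = u.+1 :> nat /\ (s v < s u)%N.
Proof.
case: (boolP [exists u : 'I_k, exists v : 'I_k, (v == u.+1 :> nat) && (s v < s u)%N]).
  by case/existsP=> u /existsP[v /andP[/eqP Huv lt_s]]; right; exists u, v.
move/existsPn=> asc; left; apply: perm_ascending_id => u v Huv.
have /existsPn/(_ v) := asc u; case: eqP => //= _; rewrite -leqNgt leq_eqVlt.
by case/orP=> // /eqP/val_inj/perm_inj/(congr1 val) /=; rewrite Huv => /n_Sn.
Qed.

Lemma letter_perm_adj u v : v = u.+1 :> nat -> letter_perm v = tperm u v.
Proof.
move=> Huv; rewrite /letter_perm Huv /=; congr tperm; apply: val_inj.
by rewrite val_insubd /= ltn_ord.
Qed.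

Lemma letter_permV (a : 'I_k) : (letter_perm a)^-1%g = letter_perm a.
Proof. by rewrite /letter_perm; case: ifP => _; [apply: invg1 | apply: tpermV]. Qed.

Lemma letter_permP a :
  letter_perm a = 1%g \/ exists2 u : 'I_k, a = u.+1 :> nat & letter_perm a = tperm u a.
Proof.
rewrite /letter_perm; case: ifP => [_|/negbT a0]; [by left | right].
by exists (insubd a a.-1); rewrite // val_insubd (leq_ltn_trans (leq_pred _)) // prednK // lt0n.
Qed.

Lemma perm_letter_word s :
  exists2 w : seq 'I_k, size w = inversions s & s = (\prod_(a <- w) letter_perm a)%g.
Proof.
have [N] := ubnP (inversions s); elim: N s => // N IH s lt_sN.
have [->|[u [v [Huv lt_s]]]] := perm_descent_or_id s.
  exists [::]; rewrite ?big_nil // /inversions big1 // => x _.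
  by rewrite big1 // => y lt_xy; rewrite !perm1 ltnNge ltnW.
have := inversions_tperm_adj s Huv; rewrite lt_s ltnNge (ltnW lt_s) /= => inv_s.
have [|w size_w s_w] := IH (tperm u v * s)%g; first lia.
exists (v :: w); first by rewrite /= size_w; lia.
by rewrite big_cons -s_w (letter_perm_adj Huv) mulgA tperm2 mul1g.
Qed.

End AdjacentTranspositions.

Lemma word_perm_surj k (s : 'S_k) : exists w : (k * k).-tuple 'I_k, word_perm w = s.
Proof.
have [w size_w ->] := perm_letter_word s.
case: k s w size_w => [|k'] s w size_w.
  by case: w size_w => [_|[]//]; exists [tuple]; rewrite /word_perm !big_nil.
have := inversions_leq s; rewrite -size_w => le_w.
pose w' := rev w ++ nseq (k'.+1 * k'.+1 - size w) ord0.
have size_w' : size w' == (k'.+1 * k'.+1)%N by rewrite size_cat size_rev size_nseq subnKC.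
exists (Tuple size_w'); rewrite /word_perm /= rev_cat revK big_cat /= rev_nseq.
by rewrite big1_seq ?mul1g // => a /andP[_ /nseqP[-> _]]; rewrite /letter_perm eqxx.
Qed.

Lemma prodr_natb (R : pzSemiRingType) (T : finType) (P B : pred T) :
  \prod_(b | P b) ((B b)%:R : R) = [forall (b | P b), B b]%:R.
Proof.
rewrite -natr_prod; congr _%:R.
case: (boolP [forall (b | P b), B b]) => [/forall_inP all_B | ].
  by rewrite big1 // => b /all_B ->.
by rewrite negb_forall_in => /exists_inP[b Pb /negbTE nBb]; rewrite (bigD1 b) //= nBb.
Qed.

Lemma CC_natr_eq0 (j : nat) : ((j%:R : CC) == 0) = (j == 0)%N.
Proof. exact: (@Num.Theory.pnatr_eq0 (Rdefinitions.R)[i] j). Qed.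

Lemma CC_eqNr (V : lmodType CC) (x : V) : x = - x -> x = 0.
Proof.
move=> x_opp; apply/eqP; have : (2%:R : CC) *: x == 0.
  by rewrite scaler_nat mulr2n {1}x_opp addNr.
by rewrite scaler_eq0 CC_natr_eq0.
Qed.

Section TensorIndices.
Variables n k : nat.
Implicit Types (I J : tidx n k) (s t : 'S_k) (u v : 'I_k).

Definition tidx_perm J s : tidx n k := [ffun x => J (s x)].

Lemma tidx_permM J s t : tidx_perm (tidx_perm J s) t = tidx_perm J (t * s).
Proof. by apply/ffunP => x; rewrite !ffunE permM. Qed.

Lemma tidx_perm1 J : tidx_perm J 1 = J.
Proof. by apply/ffunP => x; rewrite !ffunE perm1. Qed.

Lemma tidx_perm_tpermK u v J : tidx_perm (tidx_perm J (tperm u v)) (tperm u v) = J.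
Proof. by rewrite tidx_permM tperm2 tidx_perm1. Qed.

Lemma tidx_perm_tperm_id u v J : J u = J v -> tidx_perm J (tperm u v) = J.
Proof. by move=> Juv; apply/ffunP => x; rewrite ffunE; case: tpermP => [->|->|]. Qed.

Lemma tidx_perm_tpermD u v J x : x != u -> x != v -> tidx_perm J (tperm u v) x = J x.
Proof. by move=> xu xv; rewrite ffunE tpermD // eq_sym. Qed.

Definition alt I J : CC :=
  (k`!%:R)^-1 * \sum_(s : 'S_k) (-1) ^+ s * (I == tidx_perm J s)%:R.

Lemma alt_permr I J t : alt I (tidx_perm J t) = (-1) ^+ t * alt I J.
Proof.
rewrite /alt [RHS]mulrCA; congr (_ * _).
rewrite mulr_sumr (reindex_inj (mulIg t^-1)%g); apply: eq_bigr => s _ /=.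
by rewrite tidx_permM mulgVK odd_permM odd_permV signr_addb -mulrA mulrCA.
Qed.

Lemma alt_eq0 I J u v : u != v -> J u = J v -> alt I J = 0.
Proof.
move=> uv Juv; apply: CC_eqNr.
by rewrite -{1}(tidx_perm_tperm_id Juv) alt_permr odd_tperm uv mulN1r.
Qed.

Lemma sum_alt_alternating (V : lmodType CC) (F : tidx n k -> V) J :
  (forall K s, F (tidx_perm K s) = (-1) ^+ s *: F K) -> \sum_I alt I J *: F I = F J.
Proof.
move=> F_alt; have inner s : \sum_I ((-1) ^+ s * (I == tidx_perm J s)%:R) *: F I = F J.
  rewrite (bigD1 (tidx_perm J s)) //= [X in _ + X]big1 ?addr0 => [|I /negbTE ->]; last first.
    by rewrite mulr0 scale0r.
  by rewrite eqxx mulr1 F_alt scalerA -signr_addb addbb scale1r.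
rewrite /alt; under eq_bigr do rewrite -scalerA scaler_suml.
rewrite -scaler_sumr exchange_big /=; under eq_bigr do rewrite inner.
rewrite sumr_const card_Sn -[X in _ *: X]scaler_nat scalerA mulVf ?scale1r //.
by rewrite CC_natr_eq0 -lt0n fact_gt0.
Qed.

End TensorIndices.

Section Gauge.
Variables (n k : nat) (q : 'M[CC]_n).
Hypothesis q_par : parametric q.
Implicit Types (I J : tidx n k) (s t : 'S_k) (u v : 'I_k).

Definition qlt (i j : 'I_n) : CC := if (i < j)%N then q i j else 1.

Definition psi J : CC := \prod_(x : 'I_k) \prod_(y : 'I_k | (x < y)%N) qlt (J x) (J y).

Lemma parametricV i j : (q i j)^-1 = q j i.
Proof.
by case: q_par => [q_neq0 [q_inv _]]; apply: (mulfI (q_neq0 i j)); rewrite mulfV ?q_inv.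
Qed.

Lemma qlt_neq0 i j : qlt i j != 0.
Proof. by rewrite /qlt; case: ifP => _; [case: q_par | apply: oner_neq0]. Qed.

Lemma qltE i j : qlt i j = q i j * qlt j i.
Proof.
case: q_par => [_ [q_inv q_diag]]; rewrite /qlt.
by case: (ltngtP i j) => [|_|/val_inj ->]; rewrite ?mulr1 ?q_inv ?q_diag.
Qed.

Lemma psi_neq0 J : psi J != 0.
Proof. by apply/prodf_neq0 => x _; apply/prodf_neq0 => y _; apply: qlt_neq0. Qed.

Lemma psi_tperm_adj J u v : v = u.+1 :> nat ->
  psi (tidx_perm J (tperm u v)) = q (J v) (J u) * psi J.
Proof.
move=> Huv; have := big_pairs_tperm_adj (idx := 1) *%R (fun x y => qlt (J x) (J y)) Huv.
rewrite -/(psi J) => psi_swap; apply: (mulIf (qlt_neq0 (J u) (J v))).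
have [_ [q_inv _]] := q_par.
rewrite [in RHS]qltE mulrACA q_inv mul1r -psi_swap; congr (_ * _).
by apply: eq_bigr => x _; apply: eq_bigr => y _; rewrite !ffunE.
Qed.

Definition Pgauge s : op n k CC :=
  fun I J => (psi I)^-1 * (I == tidx_perm J s)%:R * psi J.

Lemma Pgauge1 I J : Pgauge 1 I J = (I == J)%:R.
Proof.
rewrite /Pgauge tidx_perm1; case: eqP => [->|_]; last by rewrite mulr0 mul0r.
by rewrite mulr1 mulVf ?psi_neq0.
Qed.

Lemma Pgauge_mul s t I J : \sum_K Pgauge s I K * Pgauge t K J = Pgauge (s * t) I J.
Proof.
rewrite (bigD1 (tidx_perm J t)) //= big1 ?addr0 => [|K /negbTE K_J]; last first.
  by rewrite /Pgauge K_J mulr0 mul0r mulr0.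
by rewrite /Pgauge eqxx tidx_permM mulr1 !mulrA mulfK ?psi_neq0.
Qed.

Lemma Pq_atE u v I J : u != v ->
  Pq_at q u v I J = (I == tidx_perm J (tperm u v))%:R * q (J u) (J v).
Proof.
move=> uv; rewrite /Pq_at (bigD1 (J v)) //= [X in _ + X]big1 ?addr0 => [|i /negbTE vi]; last first.
  by rewrite big1 // => j _; rewrite [J v == i]eq_sym vi andbF mulr0 mul0r.
rewrite (bigD1 (J u)) //= [X in _ + X]big1 ?addr0 => [|j /negbTE uj]; last first.
  by rewrite [J u == j]eq_sym uj andbF andFb mulr0 mul0r.
rewrite !eqxx !andbT prodr_natb -mulrA -natrM mulnb -andbA mulrC.
congr ((nat_of_bool _)%:R * _); apply/and3P/eqP => [[/eqP Iu /eqP Iv /forall_inP Ib]|->].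
  apply/ffunP => x; rewrite ffunE.
  by case: tpermP => [->|->|/eqP xu /eqP xv] //; apply/eqP/Ib/andP.
rewrite !ffunE tpermL tpermR; split=> //.
by apply/forall_inP => x /andP[xu xv]; rewrite tidx_perm_tpermD.
Qed.

Lemma Pq_at_adj u v I J : v = u.+1 :> nat -> Pq_at q u v I J = Pgauge (tperm u v) I J.
Proof.
move=> Huv; rewrite Pq_atE ?adj_neq // /Pgauge; case: eqP => [->|_]; last first.
  by rewrite !(mul0r, mulr0).
by rewrite psi_tperm_adj // invfM parametricV mul1r mulr1 mulfVK ?psi_neq0.
Qed.

Lemma letter_P_gauge a I J : letter_P q a I J = Pgauge (letter_perm a) I J.
Proof.
rewrite /letter_P /letter_perm; case: ifP => [_|/negbT a0]; first by rewrite Pgauge1.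
by apply: Pq_at_adj; rewrite val_insubd (leq_ltn_trans (leq_pred _)) // prednK // lt0n.
Qed.

Lemma word_P_gauge w I J : word_P q w I J = Pgauge (word_perm w)^-1 I J.
Proof.
elim: w I J => [|a w IH] I J; first by rewrite /word_perm big_nil invg1 Pgauge1.
rewrite [LHS]/word_P /= -/(word_P q w) /op_mul.
under eq_bigr do rewrite letter_P_gauge IH.
by rewrite Pgauge_mul /word_perm rev_cons big_rcons invMg letter_permV.
Qed.

Lemma Pq_perm_gauge s I J : Pq_perm q s I J = Pgauge s^-1 I J.
Proof.
rewrite /Pq_perm; case: pickP => [w /eqP <-|no_w]; first exact: word_P_gauge.
by have [w /eqP] := word_perm_surj s; rewrite no_w.
Qed.

Lemma antisym_gauge I J : antisym q I J = (psi I)^-1 * psi J * alt I J.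
Proof.
rewrite /antisym /alt mulrCA; congr (_ * _); rewrite mulr_sumr (reindex_inj invg_inj).
apply: eq_bigr => s _; rewrite /= Pq_perm_gauge invgK odd_permV /Pgauge.
by rewrite (mulrAC (psi I)^-1) mulrCA.
Qed.

End Gauge.

Section Tensors.
Variable A : algType CC.

Lemma op_prod_op_at_seq n k (X : 'M[A]_n) (s : seq 'I_k) (J I : tidx n k) : uniq s ->
  op_prod [seq op_at X a | a <- s] J I =
  \prod_(a <- s) X (J a) (I a) * [forall (b | b \notin s), J b == I b]%:R.
Proof.
elim: s J I => [|x s IH] J I /=.
  move=> _; rewrite big_nil mul1r /op_id; congr (nat_of_bool _)%:R.
  by apply/eqP/forall_inP => [-> //|J_I]; apply/ffunP => b; apply/eqP/J_I.
case/andP=> x_s uniq_s; rewrite /op_mul.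
pose K0 : tidx n k := [ffun b => if b == x then I x else J b].
rewrite (bigD1 K0) //= [X in _ + X]big1 ?addr0 => [|K K_K0]; last first.
  rewrite IH // /op_at prodr_natb.
  have [b Kb] : exists b, K b != K0 b.
    apply/existsP; rewrite -negb_forall; apply: contra K_K0 => /forallP K_eq.
    by apply/eqP/ffunP => b; apply/eqP.
  case: (eqVneq b x) Kb => [-> | bx]; rewrite ffunE ?eqxx ?(negbTE bx) => Kb.
    suff -> : [forall (b | b \notin s), K b == I b] = false by rewrite !mulr0.
    by apply/negbTE; rewrite negb_forall_in; apply/exists_inP; exists x.
  suff -> : [forall (b | b != x), J b == K b] = false by rewrite mulr0 mul0r.
  by apply/negbTE; rewrite negb_forall_in; apply/exists_inP; exists b; rewrite // eq_sym.
rewrite IH // /op_at prodr_natb.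
have -> : [forall (b | b != x), J b == K0 b].
  by apply/forall_inP => b bx; rewrite ffunE (negbTE bx).
rewrite mulr1 big_cons ffunE eqxx mulrA; congr (_ * _ * (nat_of_bool _)%:R).
  by apply: eq_big_seq => b b_s; rewrite /K0 ffunE; case: eqP => // bx; rewrite -bx b_s in x_s.
apply/idP/idP => /forall_inP J_I; apply/forall_inP => b.
  rewrite inE negb_or => /andP[bx b_s].
  by have := J_I b b_s; rewrite /K0 ffunE (negbTE bx).
rewrite /K0 ffunE; case: (eqVneq b x) => [->|bx b_s]; first by rewrite eqxx.
by apply: J_I; rewrite inE negb_or bx.
Qed.

Lemma op_prod_op_at n k (X : 'M[A]_n) (J I : tidx n k) :
  op_prod [seq op_at X a | a <- enum 'I_k] J I = \prod_(a < k) X (J a) (I a).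
Proof.
rewrite op_prod_op_at_seq ?enum_uniq //.
have -> : [forall (b | b \notin enum 'I_k), J b == I b].
  by apply/forall_inP => b; rewrite mem_enum.
by rewrite mulr1 enumT unlock.
Qed.

Definition mxtensor n m k (X : 'M[A]_(n, m)) (J : tidx n k) (L : tidx m k) : A :=
  \prod_(a < k) X (J a) (L a).

Definition Atensor n m k (q : 'M[CC]_n) (X : 'M[A]_(n, m)) (I : tidx n k) (L : tidx m k) :
    A :=
  \sum_(J : tidx n k) antisym q I J *: mxtensor X J L.

Lemma ek_tensor n k (q : 'M[CC]_n) (X : 'M[A]_n) :
  ek k q X = \sum_(I : tidx n k) \sum_(J : tidx n k) antisym q I J *: mxtensor X J I.
Proof.
by apply: eq_bigr => I _; apply: eq_bigr => J _; rewrite op_prod_op_at mulr_algl.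
Qed.

Lemma mxtensor_mul n m k (X : 'M[A]_(n, m)) (Y : 'M[A]_(m, n)) (J I : tidx n k) :
  (forall i j a b, Y i j * X a b = X a b * Y i j) ->
  mxtensor (X *m Y) J I = \sum_(L : tidx m k) mxtensor X J L * mxtensor Y L I.
Proof.
move=> XY_comm; rewrite /mxtensor; under eq_bigr do rewrite mxE.
rewrite bigA_distr_bigA; apply: eq_bigr => L _.
by rewrite prodrM_comm // => a b _ _; rewrite /GRing.comm XY_comm.
Qed.

End Tensors.

Section AdjacentProducts.
Variables (R : pzSemiRingType) (k : nat).
Implicit Types (F G : 'I_k -> R) (u v : 'I_k).

Definition prod_before u F := \prod_(0 <= i < u) F (insubd u i).
Definition prod_after v F := \prod_(v.+1 <= i < k) F (insubd v i).

Lemma prod_ord_adj u v F : v = u.+1 :> nat ->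
  \prod_(a < k) F a = prod_before u F * (F u * F v) * prod_after v F.
Proof.
move=> Huv; have lt_vk := ltn_ord v; rewrite Huv in lt_vk.
rewrite (eq_bigr (fun a : 'I_k => F (insubd u a))) => [|a _]; last by rewrite valKd.
rewrite -(big_mkord xpredT (fun i => F (insubd u i))).
rewrite (@big_cat_nat _ _ _ u) ?(ltnW (ltn_ord u)) //=.
rewrite (big_ltn (ltn_trans (ltnSn u) lt_vk)) (big_ltn lt_vk) valKd mulrA.
have -> : insubd u u.+1 = v by apply: val_inj; rewrite val_insubd lt_vk.
rewrite !mulrA; congr (_ * _); rewrite /prod_after Huv.
apply: eq_big_nat => i /andP[_ lt_ik]; congr F.
by apply: val_inj; rewrite !val_insubd lt_ik.
Qed.

Lemma eq_prod_before u F G : (forall i : 'I_k, (i < u)%N -> F i = G i) ->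
  prod_before u F = prod_before u G.
Proof.
move=> FG; apply: eq_big_nat => i /andP[_ lt_iu]; apply: FG.
by rewrite val_insubd (ltn_trans lt_iu (ltn_ord u)).
Qed.

Lemma eq_prod_after v F G : (forall i : 'I_k, (v < i)%N -> F i = G i) ->
  prod_after v F = prod_after v G.
Proof.
by move=> FG; apply: eq_big_nat => i /andP[lt_vi lt_ik]; apply: FG; rewrite val_insubd lt_ik.
Qed.

End AdjacentProducts.

Section ManinTensor.
Variables (A : algType CC) (n m k : nat) (q : 'M[CC]_n) (p : 'M[CC]_m).
Hypotheses (q_par : parametric q) (p_par : parametric p).
Variable X : 'M[A]_(n, m).
Hypothesis X_manin : manin q p X.
Implicit Types (I J : tidx n k) (L : tidx m k) (u v : 'I_k).

Lemma manin_cross (i j : 'I_n) (a b : 'I_m) : (i < j)%N -> (a < b)%N ->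
  X i a * X j b + p a b *: (X i b * X j a) =
  (q j i * p a b) *: (X j b * X i a) + q j i *: (X j a * X i b).
Proof.
move=> lt_ij lt_ab; apply/eqP; rewrite -subr_eq0 -(X_manin.2 i j a b lt_ij lt_ab).
by rewrite opprD !addrA (addrAC (X i a * X j b)).
Qed.

(* The Manin relations become (anti)symmetry properties of this rescaled tensor. *)
Definition gtensor J L : A := (psi q J * (psi p L)^-1) *: mxtensor X J L.

Section Adjacent.
Variables u v : 'I_k.
Hypothesis Huv : v = u.+1 :> nat.

Lemma mxtensor_adj J L J' L' :
    J' = J \/ J' = tidx_perm J (tperm u v) -> L' = L \/ L' = tidx_perm L (tperm u v) ->
  mxtensor X J' L' = prod_before u (fun a => X (J a) (L a)) *
    (X (J' u) (L' u) * X (J' v) (L' v)) * prod_after v (fun a => X (J a) (L a)).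
Proof.
have lt_uv : (u < v)%N by rewrite Huv.
have neq_lt (i j : 'I_k) : (i < j)%N -> i != j by move=> lt_ij; rewrite -val_eqE ltn_eqF.
move=> hJ hL.
have JJ' i : i != u -> i != v -> J' i = J i by case: hJ => -> // *; rewrite tidx_perm_tpermD.
have LL' i : i != u -> i != v -> L' i = L i by case: hL => -> // *; rewrite tidx_perm_tpermD.
rewrite /mxtensor (prod_ord_adj _ Huv); congr (_ * _ * _).
  apply: eq_prod_before => i lt_iu.
  have iu := neq_lt _ _ lt_iu; have iv := neq_lt _ _ (ltn_trans lt_iu lt_uv).
  by rewrite JJ' ?LL'.
apply: eq_prod_after => i lt_vi.
have vi := neq_lt _ _ lt_vi; have ui := neq_lt _ _ (ltn_trans lt_uv lt_vi).
by rewrite JJ' ?LL' // eq_sym.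
Qed.

Lemma gtensor_adj_strict J L : (J u < J v)%N -> (L u < L v)%N ->
  gtensor J (tidx_perm L (tperm u v)) + gtensor J L =
  gtensor (tidx_perm J (tperm u v)) (tidx_perm L (tperm u v)) +
  gtensor (tidx_perm J (tperm u v)) L.
Proof.
move=> ltJ ltL; rewrite /gtensor.
rewrite (mxtensor_adj (or_introl erefl) (or_intror erefl)).
rewrite (mxtensor_adj (or_introl erefl) (or_introl erefl)).
rewrite (mxtensor_adj (or_intror erefl) (or_intror erefl)).
rewrite (mxtensor_adj (or_intror erefl) (or_introl erefl)) !ffunE tpermL tpermR.
rewrite !psi_tperm_adj // !invfM (parametricV p_par).
set Pre := prod_before _ _; set Suf := prod_after _ _; set c := psi q J / psi p L.
have scaleC (a : CC) (Y : A) : (c * a) *: (Pre * Y * Suf) = c *: (Pre * (a *: Y) * Suf).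
  by rewrite -scalerA; congr (c *: _); rewrite -scalerAr -scalerAl.
have -> : psi q J * (p (L u) (L v) / psi p L) = c * p (L u) (L v) by rewrite /c; ring.
have -> : q (J v) (J u) * psi q J * (p (L u) (L v) / psi p L) =
  c * (q (J v) (J u) * p (L u) (L v)) by rewrite /c; ring.
have -> : q (J v) (J u) * psi q J / psi p L = c * q (J v) (J u) by rewrite /c; ring.
rewrite !scaleC -!scalerDr -!mulrDl -!mulrDr addrC.
by rewrite manin_cross.
Qed.

Lemma gtensor_adj_col_eq J L : (J u < J v)%N -> L u = L v ->
  gtensor J L = gtensor (tidx_perm J (tperm u v)) L.
Proof.
move=> ltJ eqL; rewrite /gtensor (mxtensor_adj (or_introl erefl) (or_introl erefl)).
rewrite (mxtensor_adj (or_intror erefl) (or_introl erefl)) !ffunE tpermL tpermR.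
rewrite psi_tperm_adj // -eqL (X_manin.1 _ _ _ ltJ) -scalerAr -scalerAl scalerA.
by congr (_ *: _); ring.
Qed.

Lemma gtensor_adj_row_lt J L : (J u < J v)%N ->
  gtensor J (tidx_perm L (tperm u v)) + gtensor J L =
  gtensor (tidx_perm J (tperm u v)) (tidx_perm L (tperm u v)) +
  gtensor (tidx_perm J (tperm u v)) L.
Proof.
move=> ltJ; case: (ltngtP (L u) (L v)) => [ltL|ltL|/val_inj eqL].
- exact: gtensor_adj_strict.
- have := @gtensor_adj_strict J (tidx_perm L (tperm u v)) ltJ.
  by rewrite !ffunE tpermL tpermR tidx_perm_tpermK addrC [in RHS]addrC => ->.
- by rewrite (tidx_perm_tperm_id eqL) -gtensor_adj_col_eq.
Qed.

Lemma gtensor_adj J L :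
  gtensor J (tidx_perm L (tperm u v)) + gtensor J L =
  gtensor (tidx_perm J (tperm u v)) (tidx_perm L (tperm u v)) +
  gtensor (tidx_perm J (tperm u v)) L.
Proof.
case: (ltngtP (J u) (J v)) => [ltJ|ltJ|/val_inj eqJ].
- exact: gtensor_adj_row_lt.
- have := @gtensor_adj_row_lt (tidx_perm J (tperm u v)) L.
  by rewrite !ffunE tpermL tpermR tidx_perm_tpermK => ->.
- by rewrite (tidx_perm_tperm_id eqJ).
Qed.

Lemma sum_alt_gtensor_adj I L :
  \sum_J alt I J *: (gtensor J (tidx_perm L (tperm u v)) + gtensor J L) = 0.
Proof.
have tau_inj : injective (fun J : tidx n k => tidx_perm J (tperm u v)).
  exact: (can_inj (g := fun J => tidx_perm J (tperm u v)) (@tidx_perm_tpermK _ _ u v)).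
apply: CC_eqNr; rewrite [LHS](reindex_inj tau_inj) -sumrN.
apply: eq_bigr => J _; rewrite alt_permr odd_tperm adj_neq // mulN1r scaleNr.
by rewrite -gtensor_adj.
Qed.

End Adjacent.

Definition Agauge I L : A := (psi p L)^-1 *: Atensor q X I L.

Lemma Agauge_gtensor I L : Agauge I L = (psi q I)^-1 *: \sum_J alt I J *: gtensor J L.
Proof.
rewrite /Agauge /Atensor !scaler_sumr; apply: eq_bigr => J _.
by rewrite /gtensor (antisym_gauge q_par) !scalerA; congr (_ *: _); ring.
Qed.

Lemma Agauge_adj I L u v : v = u.+1 :> nat ->
  Agauge I (tidx_perm L (tperm u v)) = - Agauge I L.
Proof.
move=> Huv; rewrite !Agauge_gtensor -scalerN; congr (_ *: _); apply/eqP.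
rewrite -addr_eq0 -big_split /=; under eq_bigr do rewrite -scalerDr.
by rewrite sum_alt_gtensor_adj.
Qed.

Lemma Agauge_perm I L s : Agauge I (tidx_perm L s) = (-1) ^+ s *: Agauge I L.
Proof.
have [w _ ->] := perm_letter_word s; elim: w => [|a w IH].
  by rewrite big_nil tidx_perm1 odd_perm1 scale1r.
rewrite big_cons -tidx_permM odd_permM signr_addb -scalerA -IH.
case: (letter_permP a) => [->|[u Hau ->]]; first by rewrite tidx_perm1 odd_perm1 scale1r.
by rewrite (Agauge_adj _ _ Hau) odd_tperm adj_neq // scaleN1r.
Qed.

Lemma Atensor_antisymr I L :
  \sum_(R : tidx m k) antisym p R L *: Atensor q X I R = Atensor q X I L.
Proof.
have AtE R : Atensor q X I R = psi p R *: Agauge I R.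
  by rewrite scalerA mulfV ?psi_neq0 ?scale1r.
have termE R : antisym p R L *: Atensor q X I R = (psi p L * alt R L) *: Agauge I R.
  rewrite AtE (antisym_gauge p_par) scalerA; congr (_ *: _).
  by field; apply: psi_neq0.
under eq_bigr do rewrite termE -scalerA.
by rewrite -scaler_sumr AtE (sum_alt_alternating _ (Agauge_perm I)).
Qed.

End ManinTensor.

Lemma antisym_eq0 m k (p : 'M[CC]_m) (R L : tidx m k) :
  parametric p -> (m < k)%N -> antisym p R L = 0.
Proof.
move=> p_par lt_mk; rewrite (antisym_gauge p_par).
have [/injectiveP L_inj|/injectivePn[x [y xy Lxy]]] := boolP (injectiveb L).
  by have := leq_card L L_inj; rewrite !card_ord leqNgt lt_mk.
by rewrite (alt_eq0 _ xy Lxy) mulr0.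
Qed.

Section Trace.
Variables (A : algType CC) (n m k : nat) (q : 'M[CC]_n) (p : 'M[CC]_m).
Hypotheses (q_par : parametric q) (p_par : parametric p).
Variables (X : 'M[A]_(n, m)) (Y : 'M[A]_(m, n)).
Hypothesis YX_comm : forall i j a b, Y i j * X a b = X a b * Y i j.

Lemma Atensor_comm (I : tidx n k) (R : tidx m k) :
  GRing.comm (Atensor p Y R I) (Atensor q X I R).
Proof.
apply: commr_sum => L _; apply/esym/commr_sum => J _.
rewrite /GRing.comm -!scalerAl -!scalerAr !scalerA mulrC; congr (_ *: _).
by apply: commr_prod => a _; apply/esym/commr_prod => b _; rewrite /GRing.comm YX_comm.
Qed.

Hypothesis X_manin : manin q p X.

Lemma ek_mul_trace : ek k q (X *m Y) =
  \sum_(I : tidx n k) \sum_(R : tidx m k) Atensor q X I R * Atensor p Y R I.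
Proof.
rewrite ek_tensor; apply: eq_bigr => I _.
under eq_bigr do rewrite mxtensor_mul // scaler_sumr.
rewrite exchange_big /=.
have AX_Y L : \sum_J antisym q I J *: (mxtensor X J L * mxtensor Y L I) =
    Atensor q X I L * mxtensor Y L I.
  by rewrite /Atensor mulr_suml; apply: eq_bigr => J _; rewrite scalerAl.
under eq_bigr do rewrite AX_Y -(Atensor_antisymr q_par p_par X_manin I) mulr_suml.
rewrite exchange_big /=; apply: eq_bigr => R _.
rewrite [Atensor p Y R I]/Atensor mulr_sumr; apply: eq_bigr => L _.
by rewrite -scalerAl scalerAr.
Qed.

Lemma ek_mul_eq0 : (m < k)%N -> ek k q (X *m Y) = 0.
Proof.
move=> lt_mk; rewrite ek_mul_trace big1 // => I _; rewrite big1 // => R _.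
by rewrite /Atensor [X in _ * X]big1 ?mulr0 // => L _; rewrite antisym_eq0 ?scale0r.
Qed.

End Trace.

Section ManinProduct.
Variables (A : algType CC) (n m : nat) (q : 'M[CC]_n) (p : 'M[CC]_m).
Hypotheses (q_par : parametric q) (p_par : parametric p).
Variables (M : 'M[A]_(n, m)) (N : 'M[A]_(m, n)).
Hypotheses (M_manin : manin q p M) (N_manin : manin p q N).
Hypothesis NM_comm : forall i j a b, N i j * M a b = M a b * N i j.

Lemma e_q_mul_swap i : e_q q i (M *m N) = e_q p i (N *m M).
Proof.
rewrite /e_q; case: eqP => // _.
have MN_comm i' j a b : M i' j * N a b = N a b * M i' j by rewrite NM_comm.
rewrite (ek_mul_trace i q_par p_par NM_comm M_manin).
rewrite (ek_mul_trace i p_par q_par MN_comm N_manin) exchange_big /=.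
by apply: eq_bigr => R _; apply: eq_bigr => I _; apply: Atensor_comm.
Qed.

Lemma e_q_mul_eq0 i : (m < i)%N -> e_q q i (M *m N) = 0.
Proof.
move=> lt_mi; rewrite /e_q; case: eqP => [i0|_]; first by rewrite i0 in lt_mi.
exact: (ek_mul_eq0 q_par p_par NM_comm M_manin lt_mi).
Qed.

End ManinProduct.

Lemma sumr_ord_widen (V : nmodType) a b (F : nat -> V) : (a <= b)%N ->
  (forall i, (a < i)%N -> F i = 0) -> \sum_(i < a.+1) F i = \sum_(i < b.+1) F i.
Proof.
move=> le_ab F_eq0; rewrite (big_ord_widen b.+1 F) ?ltnS // big_mkcond.
by apply: eq_bigr => i _; case: ltnP => // /F_eq0.
Qed.

Lemma mulXn_char_q (A : algType CC) n r (q : 'M[CC]_n) (X : 'M[A]_n) :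
  'X^r * char_q q X = \sum_(i < n.+1) ((-1) ^+ i * e_q q i X)%:P * 'X^(n + r - i).
Proof.
rewrite /char_q mulr_sumr; apply: eq_bigr => i _.
rewrite mulrA -(commr_polyXn _ r) -mulrA -exprD; congr (_ * 'X^_).
by have := ltn_ord i; lia.
Qed.

Theorem mainTheorem18 (A : algType CC) (n m : nat)
    (q : 'M[CC]_n) (p : 'M[CC]_m)
    (M : 'M[A]_(n, m)) (N : 'M[A]_(m, n)) :
  parametric q -> parametric p ->
  manin q p M -> manin p q N ->
  (forall (i : 'I_m) (j : 'I_n) (k : 'I_n) (l : 'I_m), N i j * M k l = M k l * N i j) ->
  'X^m * char_q q (M *m N) = 'X^n * char_q p (N *m M).
Proof.
move=> q_par p_par M_manin N_manin NM_comm.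
have MN_comm i j a b : M i j * N a b = N a b * M i j by rewrite NM_comm.
pose F i := ((-1) ^+ i * e_q q i (M *m N))%:P * 'X^(n + m - i).
have F_eq0 i : (m < i)%N -> F i = 0.
  by move=> lt_mi; rewrite /F (e_q_mul_eq0 q_par p_par M_manin NM_comm) // mulr0 polyC0 mul0r.
have F_eq0' i : (n < i)%N -> F i = 0.
  move=> lt_ni; rewrite /F (e_q_mul_swap q_par p_par M_manin N_manin NM_comm).
  by rewrite (e_q_mul_eq0 p_par q_par N_manin MN_comm) // mulr0 polyC0 mul0r.
rewrite !mulXn_char_q [(m + n)%N]addnC.
under [RHS]eq_bigr do rewrite -(e_q_mul_swap q_par p_par M_manin N_manin NM_comm).
by rewrite (sumr_ord_widen (leq_addr m n) F_eq0') (sumr_ord_widen (leq_addl n m) F_eq0).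
Qed.
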